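(* If $L_1$ is a context-free language and $L_2$ is a regular language (over the same finite alphabet), then $L_1 \leftarrow L_2$ and $L_2 \leftarrow L_1$ are context-free.
   Context: Outfix-guided insertion: $x \leftarrow y = \{ x_1 u z v x_2 \mid x = x_1 u v x_2,\ y = u z v,\ u \neq \varepsilon,\ v \neq \varepsilon \}$; for languages, $L_1 \leftarrow L_2 = \bigcup_{x \in L_1, y \in L_2} x \leftarrow y$. *)

From mathcomp Require Import all_boot.
From Stdlib Require Import Relations.
Set Implicit Arguments. Unset Strict Implicit. Unset Printing Implicit Defensive.

Definition word (Sigma : finType) := seq Sigma.
Definition language (Sigma : finType) := word Sigma -> Prop.

Definition regular (Sigma : finType) (L : language Sigma) : Prop :=
  exists (Q : finType) (q0 : Q) (delta : Q -> Sigma -> Q) (F : pred Q),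
    forall w : word Sigma, L w <-> foldl delta q0 w \in F.

Section CFG.
Variables (Sigma N : finType).
Definition sform := seq (N + Sigma)%type.

Definition cfg_step (P : seq (N * sform)) (u v : sform) : Prop :=
  exists (x y : sform) (A : N) (rhs : sform),
    (A, rhs) \in P /\ u = x ++ inl A :: y /\ v = x ++ rhs ++ y.

Definition cfg_derives (P : seq (N * sform)) : relation sform :=
  clos_refl_trans sform (cfg_step P).
End CFG.

Definition context_free (Sigma : finType) (L : language Sigma) : Prop :=
  exists (N : finType) (S : N) (P : seq (N * sform Sigma N)),
    forall w : word Sigma,
      L w <-> cfg_derives P [:: inl S] (map inr w).

(* Outfix-guided insertion of words:
   x <- y = { x1 u z v x2 | x = x1 u v x2, y = u z v, u <> eps, v <> eps } *)
Definition ogi_word (Sigma : finType) (x y w : word Sigma) : Prop :=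
  exists x1 u z v x2 : word Sigma,
    [/\ x = x1 ++ u ++ v ++ x2, y = u ++ z ++ v, u <> [::], v <> [::]
      & w = x1 ++ u ++ z ++ v ++ x2].

Definition ogi (Sigma : finType) (L1 L2 : language Sigma) : language Sigma :=
  fun w => exists x y, L1 x /\ L2 y /\ ogi_word x y w.

(* Both languages are images of [L1] under a nondeterministic finite-state
   transducer that, besides copying its input letter by letter, may emit extra
   letters.  For [L1 <- L2] the transducer reads x = x1 u v x2 and, between u
   and v, guesses and emits z while running the automaton of [L2] over u z v;
   for [L2 <- L1] it reads y = u z v and emits around it the letters x1 and x2
   of a word x1 u v x2 accepted by the automaton, which skips z.  Context-free
   languages are closed under such transductions by the usual triple
   construction: nonterminals are annotated with the transducer states at
   their two ends, and extra nonterminals generate the emitted letters. *)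
From HB Require Import structures.
From mathcomp Require Import all_boot.
From Stdlib Require Import Relations.
Set Implicit Arguments. Unset Strict Implicit. Unset Printing Implicit Defensive.

Section Yields.
Variables (Sigma N : finType) (P : seq (N * sform Sigma N)).

Inductive yields : sform Sigma N -> word Sigma -> Prop :=
| yields_nil : yields [::] [::]
| yields_term a f w : yields f w -> yields (inr a :: f) (a :: w)
| yields_nt A rhs f w1 w2 : (A, rhs) \in P -> yields rhs w1 -> yields f w2 ->
    yields (inl A :: f) (w1 ++ w2).

Lemma yields_cat f1 f2 w1 w2 :
  yields f1 w1 -> yields f2 w2 -> yields (f1 ++ f2) (w1 ++ w2).
Proof.
move=> H; elim: H w2 => //= [a f w _ IH|A rhs f u1 u2 HP H1 _ _ IH] w2 H2.
- by constructor; apply: IH.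
- by rewrite -catA; apply: yields_nt HP H1 _; apply: IH.
Qed.

Lemma yields_catE f1 f2 w : yields (f1 ++ f2) w ->
  exists w1 w2, [/\ w = w1 ++ w2, yields f1 w1 & yields f2 w2].
Proof.
elim: f1 w => [|X f1 IH] w /= H.
  by exists [::], w; split => //; constructor.
inversion H as [|a f w' Hf|A rhs f' u1 u2 HP Hr Hf]; subst.
- have [w1 [w2 [-> H1 H2]]] := IH _ Hf.
  by exists (a :: w1), w2; split => //; constructor.
- have [v1 [v2 [-> H1 H2]]] := IH _ Hf.
  by exists (u1 ++ v1), v2; rewrite catA; split => //; apply: yields_nt HP Hr H1.
Qed.

Lemma yields_terminals w : yields (map inr w) w.
Proof. by elim: w => [|a w IH] /=; constructor. Qed.

Lemma cfg_derives_ctx x y u v :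
  cfg_derives P u v -> cfg_derives P (x ++ u ++ y) (x ++ v ++ y).
Proof.
elim=> [u' v' [x' [y' [A [rhs [HP [-> ->]]]]]]|u'|u1 u2 u3 _ IH1 _ IH2].
- apply: rt_step; exists (x ++ x'), (y' ++ y), A, rhs.
  by rewrite -!catA.
- exact: rt_refl.
- exact: rt_trans IH1 IH2.
Qed.

Lemma yields_derives f w : yields f w -> cfg_derives P f (map inr w).
Proof.
elim=> [|a f' w' _ IH|A rhs f' w1 w2 HP _ IH1 _ IH2].
- exact: rt_refl.
- by have := cfg_derives_ctx [:: inr a] [::] IH; rewrite /= !cats0.
- apply: rt_trans (rt_step _ _ _ _ _) _; first by exists [::], f', A, rhs.
  rewrite map_cat; apply: rt_trans; first exact: (cfg_derives_ctx [::] f' IH1).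
  by have := cfg_derives_ctx (map inr w1) [::] IH2; rewrite !cats0.
Qed.

Lemma cfg_step_yields u v w : cfg_step P u v -> yields v w -> yields u w.
Proof.
move=> [x [y [A [rhs [HP [-> ->]]]]]] /yields_catE [w1 [w' [-> H1 /yields_catE]]].
move=> [w2 [w3 [-> H2 H3]]].
by apply: yields_cat H1 _; apply: yields_nt HP H2 H3.
Qed.

Lemma derives_yields f w : cfg_derives P f (map inr w) -> yields f w.
Proof.
move=> H; apply clos_rt_rt1n in H; remember (map inr w) as t eqn:Ht.
induction H as [x|x y z Hs _ IH]; first by rewrite Ht; apply: yields_terminals.
exact: cfg_step_yields Hs (IH Ht).
Qed.

Lemma cfg_derivesP f w : cfg_derives P f (map inr w) <-> yields f w.
Proof. by split; [apply: derives_yields | apply: yields_derives]. Qed.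

End Yields.

Lemma context_freeP (Sigma : finType) (L : language Sigma) :
  context_free L <->
  exists (N : finType) (S : N) (P : seq (N * sform Sigma N)),
    forall w, L w <-> yields P [:: inl S] w.
Proof.
by split=> -[N [S [P HL]]]; exists N, S, P => w;
  split=> [/HL/cfg_derivesP | /cfg_derivesP/HL].
Qed.

Lemma context_free_ext (Sigma : finType) (L L' : language Sigma) :
  (forall w, L w <-> L' w) -> context_free L -> context_free L'.
Proof. by move=> H [N [S [P HL]]]; exists N, S, P => w; split=> [/H/HL | /HL/H]. Qed.

Section Transducer.
Variables (Sigma K : finType) (copy emit : K -> Sigma -> K -> bool).

Inductive trans : K -> word Sigma -> word Sigma -> K -> Prop :=
| trans_nil k : trans k [::] [::] k
| trans_copy k a k1 x w k' :
    copy k a k1 -> trans k1 x w k' -> trans k (a :: x) (a :: w) k'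
| trans_emit k b k1 x w k' :
    emit k b k1 -> trans k1 x w k' -> trans k x (b :: w) k'.

Lemma trans_cat k x1 w1 k1 x2 w2 k2 :
  trans k x1 w1 k1 -> trans k1 x2 w2 k2 -> trans k (x1 ++ x2) (w1 ++ w2) k2.
Proof.
elim=> //= [k' a k'' x w k3 Hc _ IH|k' b k'' x w k3 He _ IH] H2.
- exact: trans_copy Hc (IH H2).
- exact: trans_emit He (IH H2).
Qed.

Lemma trans_catE k x1 x2 w k' : trans k (x1 ++ x2) w k' ->
  exists km w1 w2, [/\ w = w1 ++ w2, trans k x1 w1 km & trans km x2 w2 k'].
Proof.
move=> H; remember (x1 ++ x2) as x eqn:Hx.
induction H as [k|k a k1 x w k' Hc Hr IH|k b k1 x w k' He Hr IH] in x1, Hx |- *.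
- by case: x1 Hx => [|//] /= <-; exists k, [::], [::]; split; constructor.
- case: x1 Hx => [|a' x1] /= Hx.
    exists k, [::], (a :: w); split; first by [].
      by constructor.
    by rewrite -Hx; apply: trans_copy Hc Hr.
  case: Hx => <- /IH [km [w1 [w2 [-> H1 H2]]]].
  by exists km, (a :: w1), w2; split => //; apply: trans_copy Hc H1.
- have [km [w1 [w2 [-> H1 H2]]]] := IH _ Hx.
  by exists km, (b :: w1), w2; split => //; apply: trans_emit He H1.
Qed.

Lemma trans_consE k a x w k' : trans k (a :: x) w k' ->
  exists k1 k2 w1 w2,
    [/\ w = w1 ++ a :: w2, trans k [::] w1 k1, copy k1 a k2 & trans k2 x w2 k'].
Proof.
move=> H; remember (a :: x) as y eqn:Hy.
induction H as [k|k a' k1 x' w k' Hc Hr IH|k b k1 x' w k' He Hr IH] in Hy |- *.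
- by [].
- by case: Hy => <- <-; exists k, k1, [::], w; split => //; constructor.
- have [k2 [k3 [w1 [w2 [-> H1 H2 H3]]]]] := IH Hy.
  by exists k2, k3, (b :: w1), w2; split => //; apply: trans_emit He H1.
Qed.

End Transducer.

Section Triple.
Variables (Sigma K N : finType) (copy emit : K -> Sigma -> K -> bool).
Variables (S : N) (P : seq (N * sform Sigma N)) (k0 : K) (final : pred K).

(* [tGap k k'] derives the words emitted from [k] to [k'] without reading,
   [tLetter a k k'] and [tNt A k k'] the images of [a] and of the words derived
   from [A] by the runs from [k] to [k']. *)
Definition tnt := (((unit + (K * K)) + (Sigma * K * K)) + (N * K * K))%type.
Definition tStart : tnt := inl (inl (inl tt)).
Definition tGap k k' : tnt := inl (inl (inr (k, k'))).
Definition tLetter a k k' : tnt := inl (inr (a, k, k')).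
Definition tNt A k k' : tnt := inr (A, k, k').

Definition tsym (X : N + Sigma) k k' : tnt + Sigma :=
  match X with inl A => inl (tNt A k k') | inr a => inl (tLetter a k k') end.

(* All annotations [tGap k k1; X1 (k1, k2); tGap k2 k3; ...; tGap kn k'] of a
   sentential form [X1 ... Xn] starting in [k], paired with their end state [k']. *)
Fixpoint annotate (f : sform Sigma N) (k : K) : seq (K * sform Sigma tnt) :=
  match f with
  | [::] => [seq (k', [:: inl (tGap k k')]) | k' <- enum K]
  | X :: f' => [seq (p.1, inl (tGap k kk.1) :: tsym X kk.1 kk.2 :: p.2)
               | kk <- [seq (k1, k2) | k1 <- enum K, k2 <- enum K],
                 p <- annotate f' kk.2]
  end.

Lemma mem_annotate_nil k k' g :
  ((k', g) \in annotate [::] k) = (g == [:: inl (tGap k k')]).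
Proof.
apply/idP/idP => [/mapP [k1 _ [-> ->]] // | /eqP ->].
by apply/mapP; exists k'; rewrite ?mem_enum.
Qed.

Lemma mem_annotate_cons X f k k' g : (k', g) \in annotate (X :: f) k <->
  exists k1 k2 g', g = inl (tGap k k1) :: tsym X k1 k2 :: g'
                   /\ (k', g') \in annotate f k2.
Proof.
split=> [/allpairsPdep [[k1 k2] [[k'' g'] [_ Hin [-> ->]]]] | [k1 [k2 [g' [-> Hin]]]]].
  by exists k1, k2, g'.
apply/allpairsPdep; exists (k1, k2), (k', g'); split => //.
by apply/allpairsP; exists (k1, k2); rewrite !mem_enum.
Qed.

Definition start_prods := [seq (tStart, p.2) | p <- annotate [:: inl S] k0 & final p.1].
Definition gap_nil_prods := [seq (tGap k k, [::] : sform Sigma tnt) | k <- enum K].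
Definition gap_emit_prods :=
  [seq (tGap t.1.1.1 t.2, [:: inr t.1.1.2; inl (tGap t.1.2 t.2)] : sform Sigma tnt)
  | t <- enum {: K * Sigma * K * K} & emit t.1.1.1 t.1.1.2 t.1.2].
Definition letter_prods :=
  [seq (tLetter t.1.2 t.1.1 t.2, [:: inr t.1.2] : sform Sigma tnt)
  | t <- enum {: K * Sigma * K} & copy t.1.1 t.1.2 t.2].
Definition nt_prods :=
  [seq (tNt pk.1.1 pk.2 q.1, q.2) | pk <- [seq (p, k) | p <- P, k <- enum K],
                                    q <- annotate pk.1.2 pk.2].
Definition tprods :=
  start_prods ++ gap_nil_prods ++ gap_emit_prods ++ letter_prods ++ nt_prods.

Lemma start_prod_in k g :
  final k -> (k, g) \in annotate [:: inl S] k0 -> (tStart, g) \in tprods.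
Proof.
move=> Hf Hin; rewrite mem_cat; apply/orP; left.
by apply/mapP; exists (k, g); rewrite // mem_filter Hf.
Qed.

Lemma gap_nil_prod_in k : (tGap k k, [::]) \in tprods.
Proof. by rewrite !mem_cat map_f ?mem_enum ?orbT. Qed.

Lemma gap_emit_prod_in k b k1 k' :
  emit k b k1 -> (tGap k k', [:: inr b; inl (tGap k1 k')]) \in tprods.
Proof.
move=> He; rewrite !mem_cat; apply/orP; right; apply/orP; right; apply/orP; left.
by apply/mapP; exists (k, b, k1, k'); rewrite // mem_filter He mem_enum.
Qed.

Lemma letter_prod_in a k k' : copy k a k' -> (tLetter a k k', [:: inr a]) \in tprods.
Proof.
move=> Hc; rewrite !mem_cat; do 3!(apply/orP; right); apply/orP; left.
by apply/mapP; exists (k, a, k'); rewrite // mem_filter Hc mem_enum.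
Qed.

Lemma nt_prod_in A rhs k k' g :
  (A, rhs) \in P -> (k', g) \in annotate rhs k -> (tNt A k k', g) \in tprods.
Proof.
move=> HP Hin; rewrite !mem_cat; do 4!(apply/orP; right).
apply/allpairsPdep; exists ((A, rhs), k), (k', g); split => //.
by apply/allpairsP; exists ((A, rhs), k); rewrite mem_enum.
Qed.

Definition tnt_yield (X : tnt) (w : word Sigma) : Prop :=
  match X with
  | inl (inl (inl _)) =>
      exists x k, [/\ yields P [:: inl S] x, final k & trans copy emit k0 x w k]
  | inl (inl (inr (k, k'))) => trans copy emit k [::] w k'
  | inl (inr (a, k, k')) => w = [:: a] /\ copy k a k'
  | inr (A, k, k') => exists x, yields P [:: inl A] x /\ trans copy emit k x w k'
  end.

Definition tsym_yield (X : tnt + Sigma) (w : word Sigma) : Prop :=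
  match X with inl Y => tnt_yield Y w | inr a => w = [:: a] end.

Fixpoint tform_yield (f : sform Sigma tnt) (w : word Sigma) : Prop :=
  match f with
  | [::] => w = [::]
  | X :: f' => exists w1 w2, [/\ w = w1 ++ w2, tsym_yield X w1 & tform_yield f' w2]
  end.

Lemma annotate_sound f k k' g w : (k', g) \in annotate f k -> tform_yield g w ->
  exists x, yields P f x /\ trans copy emit k x w k'.
Proof.
elim: f k k' g w => [|X f IH] k k' g w.
  rewrite mem_annotate_nil => /eqP -> /= [w1 [w2 [-> H1 ->]]].
  by exists [::]; rewrite cats0; split => //; constructor.
move/mem_annotate_cons => [k1 [k2 [g' [-> Hin]]]] /=.
move=> [w1 [w' [-> H1 [w2 [w3 [-> H2 /(IH _ _ _ _ Hin) [x3 [D3 R3]]]]]]]].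
have [x2 [D2 R2]] : exists x2, yields P [:: X] x2 /\ trans copy emit k1 x2 w2 k2.
  case: X H2 => [B [x2 [D2 R2]] | a /= [-> Hc]]; first by exists x2.
  exists [:: a]; split; first by do 2 constructor.
  by apply: trans_copy Hc _; constructor.
exists (x2 ++ x3); split; first exact: (yields_cat D2 D3).
by rewrite -[x2 ++ x3]cat0s; apply: trans_cat H1 _; apply: trans_cat R2 R3.
Qed.

Lemma tprod_sound X g w : (X, g) \in tprods -> tform_yield g w -> tnt_yield X w.
Proof.
rewrite !mem_cat => /orP [|/orP [|/orP [|/orP []]]].
- case/mapP => [[k g']]; rewrite mem_filter => /andP [Hf Hin] [-> ->].
  by move/(annotate_sound Hin) => [x [D R]]; exists x, k.
- by case/mapP => k _ [-> ->] /= ->; constructor.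
- case/mapP => [[[[k b] k1] k']]; rewrite mem_filter /= => /andP [He _] [-> ->].
  move=> /= [w1 [w' [-> -> [w2 [w3 [-> H2 ->]]]]]].
  by rewrite cats0; apply: trans_emit He H2.
- case/mapP => [[[k a] k']]; rewrite mem_filter /= => /andP [Hc _] [-> ->].
  by move=> /= [w1 [w2 [-> -> ->]]].
- case/allpairsPdep => -[[A rhs] k] [[k' g'] [/allpairsP [[[A' rhs'] k''] [HP _ [-> -> ->]]]]].
  move=> Hin [-> ->] /(annotate_sound Hin) [x [D R]]; exists x; split => //.
  by rewrite -(cats0 x); apply: yields_nt HP D _; constructor.
Qed.

Lemma tyields_sound f w : yields tprods f w -> tform_yield f w.
Proof.
elim=> [//|a f' w' _ IH|A rhs f' w1 w2 HP _ IH1 _ IH2] /=.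
- by exists [:: a], w'.
- by exists w1, w2; split => //; apply: tprod_sound HP IH1.
Qed.

Lemma gap_complete k w k' :
  trans copy emit k [::] w k' -> yields tprods [:: inl (tGap k k')] w.
Proof.
move=> H; remember [::] as x eqn:Hx.
induction H as [k|k a k1 x w k' _ _ _|k b k1 x w k' He Hr IH] => //.
- exact: yields_nt (gap_nil_prod_in k) (yields_nil _) (yields_nil _).
- rewrite -(cats0 (b :: w)); apply: yields_nt (gap_emit_prod_in k' He) _ (yields_nil _).
  by constructor; apply: IH.
Qed.

Lemma annotate_complete f x : yields P f x -> forall k w k', trans copy emit k x w k' ->
  exists g, (k', g) \in annotate f k /\ yields tprods g w.
Proof.
elim=> [|a f' x' _ IH|B rhs f' x1 x2 HP _ IH1 _ IH2] k w k' R.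
- exists [:: inl (tGap k k')]; rewrite mem_annotate_nil; split => //.
  exact: gap_complete.
- have [k1 [k2 [w1 [w2 [-> R1 Hc R2]]]]] := trans_consE R.
  have [g [Hin D]] := IH _ _ _ R2.
  exists (inl (tGap k k1) :: inl (tLetter a k1 k2) :: g); split.
    by apply/mem_annotate_cons; exists k1, k2, g.
  apply: (yields_cat (f1 := [:: inl (tGap k k1)])); first exact: gap_complete.
  have -> : a :: w2 = ([:: a] ++ [::]) ++ w2 by [].
  by apply: yields_nt (letter_prod_in Hc) _ D; do 2 constructor.
- have [km [w1 [w2 [-> /IH1 [g1 [Hin1 D1]] /IH2 [g2 [Hin2 D2]]]]]] := trans_catE R.
  exists (inl (tGap k k) :: inl (tNt B k km) :: g2); split.
    by apply/mem_annotate_cons; exists k, km, g2.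
  rewrite -[w1 ++ w2]cat0s.
  apply: (yields_cat (f1 := [:: inl (tGap k k)])); first by apply: gap_complete; constructor.
  exact: yields_nt (nt_prod_in HP Hin1) D1 D2.
Qed.

End Triple.

Lemma context_free_trans (Sigma K : finType) (copy emit : K -> Sigma -> K -> bool)
    (k0 : K) (final : pred K) (L : language Sigma) : context_free L ->
  context_free (fun w => exists x k, [/\ L x, final k & trans copy emit k0 x w k]).
Proof.
move/context_freeP=> [N [S [P HL]]]; apply/context_freeP.
exists (tnt Sigma K N), (@tStart Sigma K N), (tprods copy emit S P k0 final) => w.
split=> [[x [k [/HL Dx Hf R]]] | /tyields_sound [w1 [w2 [-> [x [k [D Hf R]]] ->]]]].
- have [g [Hin Dg]] := annotate_complete S k0 final Dx R.
  rewrite -(cats0 w); apply: yields_nt (start_prod_in copy emit P Hf Hin) Dg _.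
  by constructor.
- by exists x, k; rewrite cats0; split => //; apply/HL.
Qed.

(* The phases of a run: reading or writing x1, u, z, v and x2 in turn. *)
Inductive phase := Prefix | Left | Middle | Right | Suffix.

Definition phase_ord (p : phase) : 'I_5 :=
  inord (match p with Prefix => 0 | Left => 1 | Middle => 2 | Right => 3 | Suffix => 4 end).
Definition ord_phase (o : 'I_5) : phase :=
  match nat_of_ord o with 0 => Prefix | 1 => Left | 2 => Middle | 3 => Right | _ => Suffix end.
Lemma phase_ordK : cancel phase_ord ord_phase.
Proof. by case; rewrite /ord_phase /phase_ord inordK. Qed.
HB.instance Definition _ := Finite.copy phase (can_type phase_ordK).

Section InsertRegular.
Variables (Sigma Q : finType) (q0 : Q) (delta : Q -> Sigma -> Q) (F : pred Q).

(* Copies x1 u v x2, emits z, and runs the automaton over u z v. *)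
Definition ins_copy (k : phase * Q) (a : Sigma) (k' : phase * Q) : bool :=
  match k.1, k'.1 with
  | Prefix, Prefix | Suffix, Suffix => k'.2 == k.2
  | Prefix, Left => k'.2 == delta q0 a
  | Left, Left | Left, Right | Middle, Right | Right, Right => k'.2 == delta k.2 a
  | Right, Suffix => (k.2 \in F) && (k'.2 == k.2)
  | _, _ => false
  end.
Definition ins_emit (k : phase * Q) (b : Sigma) (k' : phase * Q) : bool :=
  match k.1, k'.1 with
  | Left, Middle | Middle, Middle => k'.2 == delta k.2 b
  | _, _ => false
  end.
Definition ins_final (k : phase * Q) : bool :=
  match k.1 with Right | Suffix => k.2 \in F | _ => false end.

Notation T := (trans ins_copy ins_emit).

Lemma ins_trans_suffixE k x w k' : T k x w k' -> k.1 = Suffix -> w = x.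
Proof.
elim=> [//|[p s] a [p1 s1] x0 w0 k2 Hc _ IH|[p s] b [p1 s1] x0 w0 k2 He _ IH] /= Hp; subst p.
- by case: p1 Hc IH => //= _ ->.
- by case: p1 He IH.
Qed.

Lemma ins_trans_rightE k x w k' : T k x w k' -> k.1 = Right -> ins_final k' ->
  w = x /\ exists v x2, x = v ++ x2 /\ foldl delta k.2 v \in F.
Proof.
elim=> [[p s]|[p s] a [p1 s1] x0 w0 k2 Hc Hr IH|[p s] b [p1 s1] x0 w0 k2 He _ IH] /= Hp; subst p.
- by move=> Hf; split => //; exists [::], [::].
- case: p1 Hc IH Hr => //= Hc IH Hr Hf.
  + move/eqP: Hc => /= Hs1; subst s1; have [-> [v [x2 [-> Hv]]]] := IH erefl Hf.
    by split => //; exists (a :: v), x2.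
  + case/andP: Hc => Hs _; rewrite (ins_trans_suffixE Hr erefl); split => //.
    by exists [::], (a :: x0).
- by case: p1 He IH.
Qed.

Lemma ins_trans_middleE k x w k' : T k x w k' -> k.1 = Middle -> ins_final k' ->
  exists z v x2,
    [/\ x = v ++ x2, v <> [::], w = z ++ x & foldl delta k.2 (z ++ v) \in F].
Proof.
elim=> [[p s]|[p s] a [p1 s1] x0 w0 k2 Hc Hr IH|[p s] b [p1 s1] x0 w0 k2 He Hr IH]
  /= Hp; subst p => //.
- case: p1 Hc IH Hr => //= /eqP /= -> IH Hr Hf.
  have [-> [v [x2 [-> Hv]]]] := ins_trans_rightE Hr erefl Hf.
  by exists [::], (a :: v), x2.
- case: p1 He IH Hr => //= /eqP /= -> IH Hr Hf.
  have [z [v [x2 [-> Hv -> Hz]]]] := IH erefl Hf.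
  by exists (b :: z), v, x2.
Qed.

Lemma ins_trans_leftE k x w k' : T k x w k' -> k.1 = Left -> ins_final k' ->
  exists u z v x2, [/\ x = u ++ v ++ x2, v <> [::], w = u ++ z ++ v ++ x2
                    & foldl delta k.2 (u ++ z ++ v) \in F].
Proof.
elim=> [[p s]|[p s] a [p1 s1] x0 w0 k2 Hc Hr IH|[p s] b [p1 s1] x0 w0 k2 He Hr IH]
  /= Hp; subst p => //.
- case: p1 Hc IH Hr => //= /eqP /= -> IH Hr Hf.
  + have [u [z [v [x2 [-> Hv -> Hz]]]]] := IH erefl Hf.
    by exists (a :: u), z, v, x2.
  + have [-> [v [x2 [-> Hv]]]] := ins_trans_rightE Hr erefl Hf.
    by exists [::], [::], (a :: v), x2.
- case: p1 He IH Hr => //= /eqP /= -> IH Hr Hf.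
  have [z [v [x2 [-> Hv -> Hz]]]] := ins_trans_middleE Hr erefl Hf.
  by exists [::], (b :: z), v, x2.
Qed.

Lemma ins_trans_prefixE k x w k' : T k x w k' -> k.1 = Prefix -> ins_final k' ->
  exists x1 u z v x2, [/\ u <> [::], v <> [::], x = x1 ++ u ++ v ++ x2,
     w = x1 ++ u ++ z ++ v ++ x2 & foldl delta q0 (u ++ z ++ v) \in F].
Proof.
elim=> [[p s]|[p s] a [p1 s1] x0 w0 k2 Hc Hr IH|[p s] b [p1 s1] x0 w0 k2 He Hr IH]
  /= Hp; subst p => //.
case: p1 Hc IH Hr => //= /eqP /= -> IH Hr Hf.
- have [x1 [u [z [v [x2 [Hu Hv -> -> Hz]]]]]] := IH erefl Hf.
  by exists (a :: x1), u, z, v, x2.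
- have [u [z [v [x2 [-> Hv -> Hz]]]]] := ins_trans_leftE Hr erefl Hf.
  by exists [::], (a :: u), z, v, x2.
Qed.

Lemma ins_trans_fixed p s x : p = Prefix \/ p = Suffix -> T (p, s) x x (p, s).
Proof.
move=> Hp; elim: x => [|a x IH]; first by constructor.
by apply: trans_copy IH; case: Hp => ->; rewrite /ins_copy /=.
Qed.

Lemma ins_trans_delta p s u : p = Left \/ p = Right ->
  T (p, s) u u (p, foldl delta s u).
Proof.
move=> Hp; elim: u s => [|a u IH] s; first by constructor.
by apply: trans_copy (IH _); case: Hp => ->; rewrite /ins_copy /=.
Qed.

Lemma ins_trans_middle s z : T (Middle, s) [::] z (Middle, foldl delta s z).
Proof.
elim: z s => [|b z IH] s; first by constructor.
by apply: trans_emit (IH _); rewrite /ins_emit /=.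
Qed.

Lemma ins_trans_insert s z c v :
  T (Left, s) (c :: v) (z ++ c :: v) (Right, foldl delta s (z ++ c :: v)).
Proof.
have Hv s' : T (Middle, s') (c :: v) (c :: v) (Right, foldl delta s' (c :: v)).
  by apply: (trans_copy (k1 := (Right, delta s' c)));
    [rewrite /ins_copy /= | apply: ins_trans_delta; right].
case: z => [|b z] /=.
  by apply: (trans_copy (k1 := (Right, delta s c)));
    [rewrite /ins_copy /= | apply: ins_trans_delta; right].
apply: (trans_emit (k1 := (Middle, delta s b))); first by rewrite /ins_emit /=.
by rewrite foldl_cat -[c :: v]cat0s; apply: trans_cat (ins_trans_middle _ _) (Hv _).
Qed.

Lemma ins_trans_complete x1 u z v x2 : u <> [::] -> v <> [::] ->
  foldl delta q0 (u ++ z ++ v) \in F ->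
  exists k, ins_final k /\
            T (Prefix, q0) (x1 ++ u ++ v ++ x2) (x1 ++ u ++ z ++ v ++ x2) k.
Proof.
case: u => [//|a u] _; case: v => [//|c v] _ /=; set s := foldl _ _ _ => Hacc.
have [k [Hf Rx2]] : exists k, ins_final k /\ T (Right, s) x2 x2 k.
  case: x2 => [|d x2]; first by exists (Right, s); split => //; constructor.
  exists (Suffix, s); split => //; apply: trans_copy (ins_trans_fixed _ _ _).
    by rewrite /ins_copy /= Hacc eqxx.
  by right.
exists k; split => //; apply: trans_cat (ins_trans_fixed _ _ _) _; first by left.
apply: (trans_copy (k1 := (Left, delta q0 a))); first by rewrite /ins_copy /=.
apply: trans_cat (ins_trans_delta _ _ _) _; first by left.
have -> : z ++ c :: v ++ x2 = (z ++ c :: v) ++ x2 by rewrite -catA.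
by rewrite /s /= foldl_cat in Rx2; apply: trans_cat (ins_trans_insert _ _ _ _) Rx2.
Qed.

Lemma ogi_regular_r_trans (L1 L2 : language Sigma) :
  (forall y, L2 y <-> foldl delta q0 y \in F) -> forall w,
  ogi L1 L2 w <-> exists x k, [/\ L1 x, ins_final k & T (Prefix, q0) x w k].
Proof.
move=> HL2 w; split.
- move=> [x [y [Lx [/HL2 Hacc [x1 [u [z [v [x2 [Ex Ey Hu Hv ->]]]]]]]]]].
  rewrite Ey in Hacc; have [k [Hf R]] := ins_trans_complete x1 x2 Hu Hv Hacc.
  by exists x, k; split => //; rewrite Ex.
- move=> [x [k [Lx Hf /ins_trans_prefixE /(_ erefl Hf)]]].
  move=> [x1 [u [z [v [x2 [Hu Hv Ex -> /HL2 Ly]]]]]].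
  by exists x, (u ++ z ++ v); split => //; split => //; exists x1, u, z, v, x2.
Qed.

End InsertRegular.

Section InsertIntoRegular.
Variables (Sigma Q : finType) (q0 : Q) (delta : Q -> Sigma -> Q) (F : pred Q).

(* Emits x1 and x2, copies u z v, and runs the automaton over x1 u v x2. *)
Definition host_copy (k : phase * Q) (a : Sigma) (k' : phase * Q) : bool :=
  match k.1, k'.1 with
  | Prefix, Left | Left, Left | Left, Right | Middle, Right | Right, Right =>
      k'.2 == delta k.2 a
  | Left, Middle | Middle, Middle => k'.2 == k.2
  | _, _ => false
  end.
Definition host_emit (k : phase * Q) (b : Sigma) (k' : phase * Q) : bool :=
  match k.1, k'.1 with
  | Prefix, Prefix | Right, Suffix | Suffix, Suffix => k'.2 == delta k.2 b
  | _, _ => false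
  end.
Definition host_final (k : phase * Q) : bool :=
  match k.1 with Right | Suffix => k.2 \in F | _ => false end.

Notation T := (trans host_copy host_emit).

Lemma host_trans_suffixE k x w k' : T k x w k' -> k.1 = Suffix -> host_final k' ->
  x = [::] /\ foldl delta k.2 w \in F.
Proof.
elim=> [[p s]|[p s] a [p1 s1] x0 w0 k2 Hc Hr IH|[p s] b [p1 s1] x0 w0 k2 He Hr IH]
  /= Hp; subst p => //.
case: p1 He IH Hr => //= /eqP /= -> IH Hr Hf.
by have [-> H] := IH erefl Hf.
Qed.

Lemma host_trans_rightE k x w k' : T k x w k' -> k.1 = Right -> host_final k' ->
  exists x2, w = x ++ x2 /\ foldl delta k.2 (x ++ x2) \in F.
Proof.
elim=> [[p s]|[p s] a [p1 s1] x0 w0 k2 Hc Hr IH|[p s] b [p1 s1] x0 w0 k2 He Hr IH]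
  /= Hp; subst p => //.
- by move=> Hf; exists [::].
- case: p1 Hc IH Hr => //= /eqP /= -> IH Hr Hf.
  by have [x2 [-> H]] := IH erefl Hf; exists x2.
- case: p1 He IH Hr => //= /eqP /= -> IH Hr Hf.
  by have [-> H] := host_trans_suffixE Hr erefl Hf; exists (b :: w0).
Qed.

Lemma host_trans_middleE k x w k' : T k x w k' -> k.1 = Middle -> host_final k' ->
  exists z v x2,
    [/\ x = z ++ v, v <> [::], w = x ++ x2 & foldl delta k.2 (v ++ x2) \in F].
Proof.
elim=> [[p s]|[p s] a [p1 s1] x0 w0 k2 Hc Hr IH|[p s] b [p1 s1] x0 w0 k2 He Hr IH]
  /= Hp; subst p => //.
case: p1 Hc IH Hr => //= /eqP /= -> IH Hr Hf.
- have [z [v [x2 [-> Hv -> H]]]] := IH erefl Hf.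
  by exists (a :: z), v, x2.
- have [x2 [-> H]] := host_trans_rightE Hr erefl Hf.
  by exists [::], (a :: x0), x2.
Qed.

Lemma host_trans_leftE k x w k' : T k x w k' -> k.1 = Left -> host_final k' ->
  exists u z v x2, [/\ x = u ++ z ++ v, v <> [::], w = x ++ x2
                    & foldl delta k.2 (u ++ v ++ x2) \in F].
Proof.
elim=> [[p s]|[p s] a [p1 s1] x0 w0 k2 Hc Hr IH|[p s] b [p1 s1] x0 w0 k2 He Hr IH]
  /= Hp; subst p => //.
case: p1 Hc IH Hr => //= /eqP /= -> IH Hr Hf.
- have [u [z [v [x2 [-> Hv -> H]]]]] := IH erefl Hf.
  by exists (a :: u), z, v, x2.
- have [z [v [x2 [-> Hv -> H]]]] := host_trans_middleE Hr erefl Hf.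
  by exists [::], (a :: z), v, x2.
- have [x2 [-> H]] := host_trans_rightE Hr erefl Hf.
  by exists [::], [::], (a :: x0), x2.
Qed.

Lemma host_trans_prefixE k y w k' : T k y w k' -> k.1 = Prefix -> host_final k' ->
  exists x1 u z v x2, [/\ u <> [::], v <> [::], y = u ++ z ++ v,
     w = x1 ++ y ++ x2 & foldl delta k.2 (x1 ++ u ++ v ++ x2) \in F].
Proof.
elim=> [[p s]|[p s] a [p1 s1] x0 w0 k2 Hc Hr IH|[p s] b [p1 s1] x0 w0 k2 He Hr IH]
  /= Hp; subst p => //.
- case: p1 Hc IH Hr => //= /eqP /= -> IH Hr Hf.
  have [u [z [v [x2 [-> Hv -> H]]]]] := host_trans_leftE Hr erefl Hf.
  by exists [::], (a :: u), z, v, x2.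
- case: p1 He IH Hr => //= /eqP /= -> IH Hr Hf.
  have [x1 [u [z [v [x2 [Hu Hv -> -> H]]]]]] := IH erefl Hf.
  by exists (b :: x1), u, z, v, x2.
Qed.

Lemma host_trans_emit p s x : p = Prefix \/ p = Suffix ->
  T (p, s) [::] x (p, foldl delta s x).
Proof.
move=> Hp; elim: x s => [|a x IH] s; first by constructor.
by apply: trans_emit (IH _); case: Hp => ->; rewrite /host_emit /=.
Qed.

Lemma host_trans_delta p s u : p = Left \/ p = Right ->
  T (p, s) u u (p, foldl delta s u).
Proof.
move=> Hp; elim: u s => [|a u IH] s; first by constructor.
by apply: trans_copy (IH _); case: Hp => ->; rewrite /host_copy /=.
Qed.

Lemma host_trans_middle s z : T (Middle, s) z z (Middle, s).
Proof.
elim: z => [|a z IH]; first by constructor.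
by apply: trans_copy IH; rewrite /host_copy /=.
Qed.

Lemma host_trans_insert s z c v :
  T (Left, s) (z ++ c :: v) (z ++ c :: v) (Right, foldl delta s (c :: v)).
Proof.
have Hv s' : T (Middle, s') (c :: v) (c :: v) (Right, foldl delta s' (c :: v)).
  by apply: (trans_copy (k1 := (Right, delta s' c)));
    [rewrite /host_copy /= | apply: host_trans_delta; right].
case: z => [|b z] /=.
  by apply: (trans_copy (k1 := (Right, delta s c)));
    [rewrite /host_copy /= | apply: host_trans_delta; right].
apply: (trans_copy (k1 := (Middle, s))); first by rewrite /host_copy /=.
exact: trans_cat (host_trans_middle _ _) (Hv _).
Qed.

Lemma host_trans_complete x1 u z v x2 : u <> [::] -> v <> [::] ->
  foldl delta q0 (x1 ++ u ++ v ++ x2) \in F ->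
  exists k, host_final k /\
            T (Prefix, q0) (u ++ z ++ v) (x1 ++ u ++ z ++ v ++ x2) k.
Proof.
case: u => [//|a u] _; case: v => [//|c v] _.
have -> : x1 ++ (a :: u) ++ (c :: v) ++ x2 = (x1 ++ a :: u ++ c :: v) ++ x2.
  by rewrite -catA /= -catA.
rewrite foldl_cat; set s := foldl delta q0 _ => Hacc.
have Es : s = foldl delta (foldl delta (delta (foldl delta q0 x1) a) u) (c :: v).
  by rewrite /s foldl_cat /= foldl_cat.
have [k [Hf Rx2]] : exists k, host_final k /\ T (Right, s) [::] x2 k.
  case: x2 Hacc => [|d x2] Hacc; first by exists (Right, s); split => //; constructor.
  exists (Suffix, foldl delta (delta s d) x2); split => //.
  apply: (trans_emit (k1 := (Suffix, delta s d))); first by rewrite /host_emit /=.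
  by apply: host_trans_emit; right.
exists k; split => //.
have -> : (a :: u) ++ z ++ c :: v = [::] ++ a :: u ++ (z ++ c :: v) ++ [::].
  by rewrite cats0.
have -> : x1 ++ (a :: u) ++ z ++ (c :: v) ++ x2 = x1 ++ a :: u ++ (z ++ c :: v) ++ x2.
  by rewrite -!catA.
apply: trans_cat (host_trans_emit _ _ _) _; first by left.
apply: (trans_copy (k1 := (Left, delta (foldl delta q0 x1) a))).
  by rewrite /host_copy /=.
apply: trans_cat (host_trans_delta _ _ _) _; first by left.
by rewrite Es in Rx2; apply: trans_cat (host_trans_insert _ _ _ _) Rx2.
Qed.

Lemma ogi_regular_l_trans (L1 L2 : language Sigma) :
  (forall x, L2 x <-> foldl delta q0 x \in F) -> forall w,
  ogi L2 L1 w <-> exists y k, [/\ L1 y, host_final k & T (Prefix, q0) y w k].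
Proof.
move=> HL2 w; split.
- move=> [x [y [/HL2 Hacc [Ly [x1 [u [z [v [x2 [Ex Ey Hu Hv ->]]]]]]]]]].
  rewrite Ex in Hacc; have [k [Hf R]] := host_trans_complete z Hu Hv Hacc.
  by exists y, k; split => //; rewrite Ey.
- move=> [y [k [Ly Hf /host_trans_prefixE /(_ erefl Hf)]]].
  move=> [x1 [u [z [v [x2 [Hu Hv Ey -> /HL2 Lx]]]]]].
  exists (x1 ++ u ++ v ++ x2), y; split => //; split => //.
  by exists x1, u, z, v, x2; rewrite Ey -!catA.
Qed.

End InsertIntoRegular.

Theorem theorem5p3 (Sigma : finType) (L1 L2 : language Sigma) :
  context_free L1 -> regular L2 ->
  context_free (ogi L1 L2) /\ context_free (ogi L2 L1).
Proof.
move=> CF1 [Q [q0 [delta [F HL2]]]]; split.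
- apply: context_free_ext
    (context_free_trans (ins_copy q0 delta F) (ins_emit delta) (Prefix, q0) (ins_final F) CF1).
  by move=> w; apply: iff_sym; apply: ogi_regular_r_trans.
- apply: context_free_ext
    (context_free_trans (host_copy delta) (host_emit delta) (Prefix, q0) (host_final F) CF1).
  by move=> w; apply: iff_sym; apply: ogi_regular_l_trans.
Qed.
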